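(* Let $r\ge 1$ and let $G$ be an $r$-regular graph of order $n$. Then $\mathrm{LIF}(G)\ge \frac{2}{r+1}\,n$. Moreover, the bound is sharp: for the complete graph $K_{r+1}$ (which is $r$-regular of order $r+1$) one has $\mathrm{LIF}(K_{r+1})=2=\frac{2}{r+1}(r+1)$.
   Context: All graphs are finite and simple. A linear forest is a forest each of whose connected components is a path (a single vertex counts as a path). For a graph $G$, $\mathrm{LIF}(G)$ denotes the maximum number of vertices of an induced subgraph of $G$ that is a linear forest. The order of a graph is its number of vertices. *)

From mathcomp Require Import all_boot.
Set Implicit Arguments. Unset Strict Implicit. Unset Printing Implicit Defensive.

Definition simple_graph (T : finType) (e : rel T) : Prop := symmetric e /\ irreflexive e.

Definition regular (T : finType) (e : rel T) (r : nat) : Prop :=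
  forall v : T, #|[set w | e v w]| = r.

Definition ideg (T : finType) (e : rel T) (S : {set T}) (v : T) : nat :=
  #|[set w in S | e v w]|.

(* Since a duplicate-free sequence over T has length <= #|T|, we quantify over
   tuples of length n <= #|T| to obtain a boolean (decidable) predicate. *)
Definition has_cycle_in (T : finType) (e : rel T) (S : {set T}) : bool :=
  [exists n : 'I_#|T|.+1, [exists c : n.-tuple T,
     [&& 3 <= size c, uniq c, all (fun x => x \in S) c & cycle e c]]].

(* G[S] is a linear forest: a forest (acyclic) all of whose vertices have degree <= 2,
   i.e. every component is a path. *)
Definition linear_forest (T : finType) (e : rel T) (S : {set T}) : bool :=
  ~~ has_cycle_in e S && [forall v in S, ideg e S v <= 2].

Definition LIF (T : finType) (e : rel T) : nat :=
  \max_(S : {set T} | linear_forest e S) #|S|.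

Definition complete_rel (m : nat) : rel 'I_m := fun i j => i != j.

From mathcomp Require Import all_boot zify.
Set Implicit Arguments. Unset Strict Implicit. Unset Printing Implicit Defensive.

(* Lovasz's partition lemma: if every vertex has degree at most r and
   (d_1 + 1) + ... + (d_m + 1) > r, the vertices split into classes V_i in
   which every vertex has at most d_i neighbours; a partition minimising the
   number of edges inside classes, an edge inside V_i counted with weight
   1/(d_i + 1), will do.  Write r + 1 as a sum of 2s and at most one 3, i.e.
   take d_i = 1 except for at most one d_i = 2.  A class of maximum degree 1
   is an induced linear forest; in a class of maximum degree 2 every cycle is
   a whole component, so deleting one vertex per cycle leaves a linear forest
   on at least 2/3 of the class.  Hence 2 |V_i| <= (d_i + 1) LIF(G), and
   summing gives 2 n <= (r + 1) LIF(G).  In K_(r+1) any three vertices form a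
   triangle, so LIF(K_(r+1)) = 2. *)

Section Cycles.
Variables (T : finType) (e : rel T).
Hypothesis e_sym : symmetric e.

Definition cycle_in (S : {set T}) (c : seq T) :=
  [&& 3 <= size c, uniq c, all (fun x => x \in S) c & cycle e c].

Lemma has_cycle_inP (S : {set T}) : reflect (exists c, cycle_in S c) (has_cycle_in e S).
Proof.
apply: (iffP existsP) => [[n /existsP [c c_S]]|[c c_S]]; first by exists c.
have size_c : size c < #|T|.+1.
  by case/and4P: c_S => _ /card_uniqP <- _ _; rewrite ltnS max_card.
by exists (Ordinal size_c); apply/existsP; exists (@Tuple _ _ c (eqxx _)).
Qed.

Lemma cycle_in_subset (S S' : {set T}) c : S \subset S' -> cycle_in S c -> cycle_in S' c.
Proof.
move=> sSS' /and4P [size_c uniq_c /allP c_S cycle_c]; apply/and4P; split=> //.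
by apply/allP => x /c_S /(subsetP sSS').
Qed.

Lemma cycle_in_card (S : {set T}) c : cycle_in S c -> 3 <= #|S|.
Proof.
case/and4P=> size_c /card_uniqP card_c /allP c_S _.
by rewrite (leq_trans size_c) // -card_c subset_leq_card //; apply/subsetP.
Qed.

Lemma cycle_in_neighbours (S : {set T}) c x : cycle_in S c -> x \in c ->
  exists a b, [/\ a != b, a \in c, b \in c, e x a & e x b].
Proof.
case/and4P=> size_c uniq_c _ cycle_c /rot_to [i s rot_c].
have mem_c y : y \in x :: s -> y \in c by rewrite -rot_c mem_rot.
move: (size_c) (uniq_c) (cycle_c); rewrite -(size_rot i) -(rot_uniq i) -(rot_cycle i) rot_c.
case: s rot_c mem_c => [|a [|b s]] //= _ mem_c _ /andP [_ /andP [a_bs _]].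
rewrite rcons_path => /and3P [xa _ /andP [_ last_x]].
exists a, (last b s); split.
- by apply: contraNneq a_bs => ->; rewrite mem_last.
- by rewrite mem_c // !inE eqxx orbT.
- by rewrite mem_c // 2!inE mem_last !orbT.
- exact: xa.
- by rewrite e_sym last_x.
Qed.

Lemma ideg_subset (S S' : {set T}) v : S \subset S' -> ideg e S v <= ideg e S' v.
Proof.
move=> sSS'; apply: subset_leq_card; apply/subsetP => w.
by rewrite !inE => /andP [/(subsetP sSS') -> ->].
Qed.

Lemma ideg_leq_card (S : {set T}) v : ideg e S v <= #|S|.
Proof. by apply: subset_leq_card; apply/subsetP => w; rewrite inE => /andP []. Qed.

Lemma cycle_in_ideg (S : {set T}) c x : cycle_in S c -> x \in c -> 2 <= ideg e S x.
Proof.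
move=> c_S x_c; have [a [b [ab a_c b_c xa xb]]] := cycle_in_neighbours c_S x_c.
case/and4P: c_S => _ _ /allP c_S _.
have <- : #|[set a; b]| = 2 by rewrite cards2 ab.
apply: subset_leq_card; apply/subsetP => y.
by rewrite !inE => /orP [] /eqP ->; rewrite c_S.
Qed.

Lemma small_linear_forest (S : {set T}) : #|S| <= 2 -> linear_forest e S.
Proof.
move=> card_S; apply/andP; split.
  by apply/negP => /has_cycle_inP [c /cycle_in_card]; rewrite leqNgt ltnS card_S.
by apply/forall_inP => v _; rewrite (leq_trans (ideg_leq_card S v)).
Qed.

Lemma ideg1_linear_forest (S : {set T}) : {in S, forall v, ideg e S v <= 1} -> linear_forest e S.
Proof.
move=> deg1; apply/andP; split; last first.
  by apply/forall_inP => v /deg1 /leq_trans; apply.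
apply/negP => /has_cycle_inP [[|x s] c_S]; first by case/and4P: c_S.
have x_S : x \in S by case/and4P: c_S => _ _ /andP [].
by have := leq_trans (cycle_in_ideg c_S (mem_head x s)) (deg1 x x_S).
Qed.

Lemma linear_forest_leq_LIF (S : {set T}) : linear_forest e S -> #|S| <= LIF e.
Proof. exact: (@leq_bigmax_cond _ (linear_forest e) (fun S : {set T} => #|S|)). Qed.

End Cycles.

Section MaxDegreeTwo.
Variables (T : finType) (e : rel T) (B : {set T}).
Hypothesis e_sym : symmetric e.
Hypothesis B_deg2 : {in B, forall v, ideg e B v <= 2}.

Lemma cycle_in_nbr_closed c y z :
  cycle_in e B c -> y \in c -> z \in B -> e y z -> z \in c.
Proof.
move=> c_B y_c z_B yz; apply: contraT => z_notin_c.
have [a [b [ab a_c b_c ya yb]]] := cycle_in_neighbours e_sym c_B y_c.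
have c_sub_B : {subset c <= B} by case/and4P: c_B => _ _ /allP.
have : 3 <= ideg e B y.
  have <- : #|z |: [set a; b]| = 3.
    rewrite cardsU1 cards2 ab !inE negb_or.
    by rewrite (contraNneq _ z_notin_c) ?(contraNneq _ z_notin_c) // => ->.
  apply: subset_leq_card; apply/subsetP => u.
  by rewrite !inE => /or3P [] /eqP ->; rewrite ?z_B ?c_sub_B ?yz.
by rewrite leqNgt ltnS B_deg2 ?c_sub_B.
Qed.

Lemma cycle_in_meet_subset c c' x : cycle_in e B c -> cycle_in e B c' ->
  x \in c -> x \in c' -> {subset c <= c'}.
Proof.
move=> c_B c'_B x_c x_c'; have [i s rot_c] := rot_to x_c.
have c_sub_B : {subset c <= B} by case/and4P: c_B => _ _ /allP.
have s_sub_c y : y \in s -> y \in c by move=> y_s; rewrite -(mem_rot i) rot_c inE y_s orbT.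
have path_xs : path e x s.
  by case/and4P: c_B => _ _ _; rewrite -(rot_cycle i) rot_c /= rcons_path => /andP [].
suff s_sub_c' : {subset s <= c'}.
  by move=> y; rewrite -(mem_rot i) rot_c inE => /predU1P [-> | /s_sub_c'].
elim: s {rot_c} x {x_c} x_c' s_sub_c path_xs => // y s IH x x_c' sub /= /andP [xy path_ys] u.
have y_c' : y \in c'.
  exact: cycle_in_nbr_closed c'_B x_c' (c_sub_B y (sub y (mem_head y s))) xy.
rewrite inE => /predU1P [-> // | u_s].
by apply: IH y_c' _ path_ys u u_s => v v_s; apply: sub; rewrite inE v_s orbT.
Qed.

Lemma acyclic_setU_cycle_behead x s (F : {set T}) :
  cycle_in e B (x :: s) -> F \subset B :\: [set y in x :: s] ->
  ~~ has_cycle_in e F -> ~~ has_cycle_in e (F :|: [set y in s]).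
Proof.
move=> c_B F_sub F_acyclic; apply/negP => /has_cycle_inP [c c_FS].
have c_B' : cycle_in e B c.
  apply: cycle_in_subset c_FS; rewrite subUset (subset_trans F_sub (subsetDl _ _)).
  by apply/subsetP => y; rewrite inE => y_s; case/and4P: c_B => _ _ /andP [_ /allP /(_ y y_s)].
have [/hasP [y y_c y_xs] | c_disj] := boolP (has (fun y => y \in x :: s) c).
  have x_c := cycle_in_meet_subset c_B c_B' y_xs y_c (mem_head x s).
  case/and4P: c_FS => _ _ /allP /(_ x x_c) + _; rewrite !inE => /orP [/(subsetP F_sub) | x_s].
    by rewrite !inE eqxx.
  by case/and4P: c_B => _ /andP [/negP].
case/negP: F_acyclic; apply/has_cycle_inP; exists c.
case/and4P: c_FS => size_c uniq_c /allP c_FS cycle_c; apply/and4P; split=> //.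
apply/allP => y y_c; move: (c_FS y y_c); rewrite !inE => /orP [// | y_s].
by have := hasPn c_disj y y_c; rewrite inE y_s orbT.
Qed.

End MaxDegreeTwo.

Lemma ideg2_linear_forest (T : finType) (e : rel T) (B : {set T}) :
  symmetric e -> {in B, forall v, ideg e B v <= 2} ->
  exists F : {set T}, [/\ F \subset B, linear_forest e F & 2 * #|B| <= 3 * #|F|].
Proof.
move=> e_sym; have [n] := ubnP #|B|; elim: n B => // n IH B card_B B_deg2.
have sub_deg2 (S : {set T}) : S \subset B -> {in S, forall v, ideg e S v <= 2}.
  by move=> sSB v /(subsetP sSB) /B_deg2; apply: leq_trans (ideg_subset e v sSB).
have [/has_cycle_inP [c c_B] | B_acyclic] := boolP (has_cycle_in e B); last first.
  exists B; rewrite /linear_forest B_acyclic leq_mul2r orbT; split=> //=.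
  by apply/forall_inP; exact: B_deg2.
case: c c_B => [/and4P [] // | x s c_B].
set C := [set y in x :: s].
have C_sub_B : C \subset B.
  by apply/subsetP => y; rewrite inE; case/and4P: c_B => _ _ /allP + _; apply.
have card_C : #|C| = (size s).+1 by rewrite cardsE; apply/card_uniqP; case/and4P: c_B.
have card_BC : #|B :\: C| + #|C| = #|B|.
  by rewrite cardsD (setIidPr C_sub_B) subnK ?subset_leq_card.
have [|F [F_sub F_lf card_F]] := IH (B :\: C) _ (sub_deg2 _ (subsetDl B C)); first by lia.
have card_s : #|[set y in s]| = size s.
  by rewrite cardsE; apply/card_uniqP; case/and4P: c_B => _ /andP [].
have card_FS : #|F :|: [set y in s]| = #|F| + size s.
  rewrite cardsU -card_s; suff -> : F :&: [set y in s] = set0 by rewrite cards0 subn0.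
  apply/setP => y; rewrite !inE; apply/negP => /andP [/(subsetP F_sub)].
  by rewrite !inE => /andP [/negP y_xs _] y_s; apply: y_xs; rewrite y_s orbT.
have FS_sub : F :|: [set y in s] \subset B.
  rewrite subUset (subset_trans F_sub (subsetDl B C)) (subset_trans _ C_sub_B) //.
  by apply/subsetP => y; rewrite !inE => ->; rewrite orbT.
exists (F :|: [set y in s]); split=> //.
- rewrite /linear_forest (acyclic_setU_cycle_behead e_sym B_deg2 c_B F_sub) ?(andP F_lf).1 //=.
  by apply/forall_inP; apply: sub_deg2.
- have : 2 <= size s by case/and4P: c_B.
  by lia.
Qed.

Lemma card_fibres (T : finType) m (f : T -> 'I_m) :
  #|T| = \sum_j #|[set x | f x == j]|.
Proof.
rewrite -cardsT -(sum1dep_card predT) (partition_big f predT) //=.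
by apply: eq_bigr => j _; rewrite sum1dep_card.
Qed.

Lemma sum_ideg_fibres (T : finType) (e : rel T) m (f : T -> 'I_m) v :
  \sum_j ideg e [set x | f x == j] v = #|[set y | e v y]|.
Proof.
rewrite -sum1dep_card (partition_big f predT) //=; apply: eq_bigr => j _.
by rewrite /ideg -sum1dep_card; apply: eq_bigl => y; rewrite inE andbC.
Qed.

Section LovaszPartition.
Variables (T : finType) (e : rel T) (m : nat) (d : 'I_m -> nat).
Hypotheses (e_sym : symmetric e) (e_irr : irreflexive e).

Let weight i := \prod_(j | j != i) (d j).+1.

Let weight_gt0 i : 0 < weight i.
Proof. by apply: prodn_gt0. Qed.

Let weightP i : weight i * (d i).+1 = \prod_j (d j).+1.
Proof. by rewrite [RHS](bigD1 i) //= mulnC. Qed.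

Let mono (f : {ffun T -> 'I_m}) x y := (e x y && (f x == f y)) * weight (f x).

Definition potential (f : {ffun T -> 'I_m}) := \sum_x \sum_y mono f x y.

Let potential_off (f : {ffun T -> 'I_m}) v :=
  \sum_(x | x != v) \sum_(y | y != v) mono f x y.

Let monoC f x y : mono f x y = mono f y x.
Proof. by rewrite /mono e_sym eq_sym; case: eqP => [-> | _]; rewrite ?andbF. Qed.

Let sum_mono f v : \sum_y mono f v y = weight (f v) * ideg e [set x | f x == f v] v.
Proof.
rewrite /ideg -sum1dep_card big_distrr [RHS]big_mkcond /=; apply: eq_bigr => y _.
by rewrite /mono !inE andbC eq_sym; case: (_ && _); rewrite ?mul1n ?muln1.
Qed.

Let potential_split f v :
  potential f = (weight (f v) * ideg e [set x | f x == f v] v).*2 + potential_off f v.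
Proof.
rewrite /potential (bigD1 v) //=.
rewrite [X in _ + X](eq_bigr (fun x => mono f x v + \sum_(y | y != v) mono f x y)).
  2: by move=> x _; rewrite (bigD1 v).
rewrite big_split /= addnA -addnn -sum_mono; congr (_ + _ + _).
rewrite [RHS](bigD1 v) //= [mono f v v]/mono e_irr add0n.
apply: eq_bigr => x _; exact: monoC.
Qed.

Let potential_reassign (f : {ffun T -> 'I_m}) v (j : 'I_m) :
  potential [ffun x => if x == v then j else f x] =
  (weight j * ideg e [set x | f x == j] v).*2 + potential_off f v.
Proof.
rewrite (potential_split _ v) ffunE eqxx; congr (_ .*2 + _).
  congr (_ * _); apply: eq_card => y; rewrite !inE ffunE.
  by case: (eqVneq y v) => [-> |]; rewrite ?e_irr ?andbF.
apply: eq_bigr => x xv; apply: eq_bigr => y yv.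
by rewrite /mono !ffunE (negbTE xv) (negbTE yv).
Qed.

Lemma lovasz_partition r :
  (forall v, #|[set y | e v y]| <= r) -> r < \sum_i (d i).+1 ->
  exists f : {ffun T -> 'I_m}, forall v, ideg e [set x | f x == f v] v <= d (f v).
Proof.
move=> deg_r r_lt.
have [i0 _ | no_index] := pickP (@predT 'I_m); last by move: r_lt; rewrite big_pred0.
have [f _ f_min] := arg_minnP potential (isT : predT [ffun=> i0]).
exists f => v; rewrite leqNgt; apply/negP => v_over.
have over_all j : (d j).+1 <= ideg e [set x | f x == j] v.
  have := f_min [ffun x => if x == v then j else f x] isT.
  rewrite potential_reassign (potential_split f v) leq_add2r leq_double => le_j.
  rewrite -(leq_pmul2l (weight_gt0 j)) weightP -(weightP (f v)).
  by apply: leq_trans le_j; rewrite leq_pmul2l.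
have : \sum_j (d j).+1 <= \sum_j ideg e [set x | f x == j] v by apply: leq_sum => j _.
by rewrite sum_ideg_fibres leqNgt (leq_ltn_trans (deg_r v) r_lt).
Qed.

End LovaszPartition.

Lemma ideg_bounded_LIF (T : finType) (e : rel T) (S : {set T}) k :
  symmetric e -> 1 <= k <= 2 -> {in S, forall v, ideg e S v <= k} ->
  2 * #|S| <= k.+1 * LIF e.
Proof.
move=> e_sym /andP [k_gt0 k_le2] S_deg.
have [k_eq1 | k_ne1] := eqVneq k 1.
  have S_deg1 : {in S, forall v, ideg e S v <= 1} by rewrite -k_eq1.
  by rewrite k_eq1 leq_mul2l linear_forest_leq_LIF ?ideg1_linear_forest.
have k_eq2 : k = 2 by lia.
have [|F [_ F_lf card_F]] := ideg2_linear_forest e_sym (B := S); first by rewrite -k_eq2.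
by rewrite k_eq2 (leq_trans card_F) // leq_mul2l linear_forest_leq_LIF.
Qed.

Lemma partition_LIF (T : finType) (e : rel T) m (d : 'I_m -> nat) (f : T -> 'I_m) :
  symmetric e -> (forall i, 1 <= d i <= 2) ->
  (forall v, ideg e [set x | f x == f v] v <= d (f v)) ->
  2 * #|T| <= (\sum_i (d i).+1) * LIF e.
Proof.
move=> e_sym d12 f_deg; rewrite (card_fibres f) big_distrr big_distrl /=.
apply: leq_sum => j _; apply: ideg_bounded_LIF => // v.
by rewrite inE => /eqP <-.
Qed.

Lemma sum_two_three s :
  exists m (d : 'I_m -> nat), (forall i, 1 <= d i <= 2) /\ \sum_i (d i).+1 = s.+2.
Proof.
exists s./2.+1, (fun i => if odd s && (val i == 0) then 2 else 1); split=> [i | ].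
  by case: ifP.
rewrite big_ord_recl /= andbT (eq_bigr (fun _ => 2)) ?sum_nat_const ?card_ord; last first.
  by move=> i _; rewrite andbF.
by have := odd_double_half s; case: (odd s) => /=; lia.
Qed.

Lemma complete_rel_simple m : simple_graph (@complete_rel m).
Proof. by split=> [i j | i]; rewrite /complete_rel 1?eq_sym ?eqxx. Qed.

Lemma complete_rel_regular m : regular (@complete_rel m.+1) m.
Proof.
move=> v; have -> : [set w | complete_rel v w] = [set~ v].
  by apply/setP => w; rewrite !inE /complete_rel eq_sym.
by rewrite cardsC1 card_ord.
Qed.

Lemma LIF_complete m : LIF (@complete_rel m.+2) = 2.
Proof.
apply/eqP; rewrite eqn_leq; apply/andP; split.
  apply/bigmax_leqP => S /andP [S_acyclic _]; rewrite leqNgt; apply: contra S_acyclic.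
  case/card_gt2P=> x [y [z [[xS yS zS] [xy yz zx]]]]; apply/has_cycle_inP.
  exists [:: x; y; z]; rewrite /cycle_in /= xS yS zS /complete_rel !inE !negb_or.
  by rewrite xy yz zx (eq_sym x z) zx.
have card_2 : #|[set ord0; ord_max : 'I_m.+2]| = 2 by rewrite cards2.
by rewrite -{1}card_2 linear_forest_leq_LIF // small_linear_forest ?card_2.
Qed.

Theorem theorem1 :
  (forall (T : finType) (e : rel T) (r : nat),
      1 <= r -> simple_graph e -> regular e r ->
      2 * #|T| <= r.+1 * LIF e) /\
  (forall r : nat, 1 <= r ->
      simple_graph (@complete_rel r.+1) /\ regular (@complete_rel r.+1) r /\
      LIF (@complete_rel r.+1) = 2).
Proof.
split=> [T e [|s] // _ [e_sym e_irr] e_reg | [|s] // _].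
  have [m [d [d12 sum_d]]] := sum_two_three s.
  have e_deg v : #|[set y | e v y]| <= s.+1 by rewrite e_reg.
  have [|f f_deg] := lovasz_partition e_sym e_irr (d := d) e_deg; first by rewrite sum_d.
  by rewrite -sum_d (partition_LIF e_sym d12 f_deg).
split; first exact: complete_rel_simple.
by split; [exact: complete_rel_regular | exact: LIF_complete].
Qed.
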